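(* There is an absolute constant $C$ such that for all integers $n\ge1$ and $1\le d\le n$, every $r\in\{0,1,\dots,d-1\}$ and every $\alpha\in(0,1)$, $$\Big|\sum_{\substack{0\le l\le n\\ l\equiv r \ (\mathrm{mod}\ d)}}\binom nl\alpha^l(1-\alpha)^{n-l}-\frac1d\Big|\le \frac{C}{\sqrt{\alpha(1-\alpha)n}}.$$ *)

From Stdlib Require Import Reals Lra Lia Arith List.
Open Scope R_scope.

Definition binom_residue_sum (n d r : nat) (a : R) : R :=
  sum_f_R0 (fun l => if Nat.eqb (l mod d) r
                     then Binomial.C n l * a ^ l * (1 - a) ^ (n - l)
                     else 0) n.

(* Write p_l for the Binomial(n, alpha) probabilities and G(l) for the partial sums of
   [l ≡ r (mod d)] - 1/d, so that |G(l)| <= 1. Abel summation turns the discrepancy into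
   sum_l G(l+1) (p_l - p_(l+1)), hence it is at most the total variation sum_l |p_l - p_(l+1)|.
   The ratio identity p_l - p_(l+1) = q_(l+1) (l+1 - N alpha) / (N alpha (1-alpha)), with q the
   Binomial(N, alpha) law and N = n+1, and the AM-GM bound |x| <= (x^2/s + s)/2 with
   s = sqrt (N alpha (1-alpha)) reduce the total variation to the variance of q, which gives
   the constant C = 1. *)
From Stdlib Require Import Reals Lra Lia Arith.
Open Scope R_scope.

Definition binom_pmf (a : R) (n k : nat) : R := C n k * a ^ k * (1 - a) ^ (n - k).

Lemma C_ge0 (n k : nat) : 0 <= C n k.
Proof.
  unfold C. apply Rmult_le_pos; [apply pos_INR|].
  apply Rlt_le, Rinv_0_lt_compat, Rmult_lt_0_compat;
    apply lt_0_INR, Factorial.lt_O_fact.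
Qed.

Lemma binom_pmf_ge0 (a : R) (n k : nat) : 0 <= a <= 1 -> 0 <= binom_pmf a n k.
Proof.
  intros Ha. unfold binom_pmf.
  apply Rmult_le_pos; [apply Rmult_le_pos; [apply C_ge0|]|]; apply pow_le; lra.
Qed.

Lemma binom_pmf_sum (a : R) (n : nat) : sum_f_R0 (binom_pmf a n) n = 1.
Proof.
  unfold binom_pmf. rewrite <- binomial.
  replace (a + (1 - a)) with 1 by ring. apply pow1.
Qed.

Lemma binom_pmf_succ (a : R) (n k : nat) : (k <= n)%nat ->
  INR (S k) * binom_pmf a (S n) (S k) = INR (S n) * a * binom_pmf a n k.
Proof.
  intros Hk. unfold binom_pmf. replace (S n - S k)%nat with (n - k)%nat by lia.
  rewrite pascal_step3, pascal_step2 by lia.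
  assert (INR (S n - k) <> 0) by (apply not_0_INR; lia).
  assert (INR (S k) <> 0) by (apply not_0_INR; lia).
  simpl pow. field. split; assumption.
Qed.

Lemma binom_pmf_mean (a : R) (n : nat) :
  sum_f_R0 (fun k => INR k * binom_pmf a n k) n = INR n * a.
Proof.
  destruct n as [|n]; [simpl; ring|].
  rewrite decomp_sum by lia. simpl pred.
  rewrite (sum_eq _ (fun k => binom_pmf a n k * (INR (S n) * a))).
  - rewrite <- scal_sum, binom_pmf_sum. simpl INR at 1. ring.
  - intros k Hk. rewrite binom_pmf_succ by lia. ring.
Qed.

Lemma binom_pmf_second_moment (a : R) (n : nat) :
  sum_f_R0 (fun k => INR k * INR k * binom_pmf a (S n) k) (S n)
  = INR (S n) * a * (INR n * a + 1).
Proof.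
  rewrite decomp_sum by lia. simpl pred.
  rewrite (sum_eq _ (fun k => INR k * binom_pmf a n k * (INR (S n) * a)
                              + binom_pmf a n k * (INR (S n) * a))).
  - rewrite sum_plus, <- !scal_sum, binom_pmf_mean, binom_pmf_sum.
    simpl INR at 1. ring.
  - intros k Hk. rewrite Rmult_assoc, binom_pmf_succ by lia. rewrite S_INR. ring.
Qed.

Lemma binom_pmf_variance (a : R) (n : nat) :
  sum_f_R0 (fun k => binom_pmf a n k * (INR k - INR n * a) ^ 2) n
  = INR n * a * (1 - a).
Proof.
  destruct n as [|n]; [simpl; ring|].
  rewrite (sum_eq _ (fun k => INR k * INR k * binom_pmf a (S n) k
                              + INR k * binom_pmf a (S n) k * (-2 * INR (S n) * a)
                              + binom_pmf a (S n) k * (INR (S n) * a) ^ 2)).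
  - rewrite !sum_plus, <- !scal_sum.
    rewrite binom_pmf_second_moment, binom_pmf_mean, binom_pmf_sum, S_INR. ring.
  - intros k _. ring.
Qed.

(* [C n k] does not vanish for [k > n] (the subtraction in [fact (n - k)] truncates),
   so the sequence is cut off explicitly beyond [n]. *)
Definition binom_pmf_ext (a : R) (n l : nat) : R :=
  if Nat.leb l n then binom_pmf a n l else 0.

Lemma binom_pmf_ext_succ (a : R) (n l : nat) : 0 < a < 1 -> (l <= n)%nat ->
  INR (S l) * (1 - a) * binom_pmf_ext a n (S l) = INR (n - l) * a * binom_pmf_ext a n l.
Proof.
  intros Ha Hl. unfold binom_pmf_ext.
  rewrite (proj2 (Nat.leb_le l n) Hl).
  destruct (Nat.eq_dec l n) as [->|Hne].
  - rewrite (proj2 (Nat.leb_gt (S n) n)) by lia. rewrite Nat.sub_diag. simpl. ring.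
  - rewrite (proj2 (Nat.leb_le (S l) n)) by lia. unfold binom_pmf.
    rewrite pascal_step3 by lia. replace (n - l)%nat with (S (n - S l)) by lia.
    assert (INR (S l) <> 0) by (apply not_0_INR; lia).
    simpl pow. field. assumption.
Qed.

Lemma binom_pmf_ext_diff (a : R) (n l : nat) : 0 < a < 1 -> (l <= n)%nat ->
  binom_pmf_ext a n l - binom_pmf_ext a n (S l)
  = binom_pmf a (S n) (S l) * (INR (S l) - INR (S n) * a) / (INR (S n) * a * (1 - a)).
Proof.
  intros Ha Hl.
  assert (HSl : INR (S l) <> 0) by (apply not_0_INR; lia).
  assert (HSn : INR (S n) <> 0) by (apply not_0_INR; lia).
  assert (Hp : binom_pmf_ext a n l = binom_pmf a n l).
  { unfold binom_pmf_ext. now rewrite (proj2 (Nat.leb_le l n) Hl). }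
  assert (Hnext : binom_pmf_ext a n (S l)
                  = INR (n - l) * a * binom_pmf a n l / (INR (S l) * (1 - a))).
  { rewrite <- Hp, <- binom_pmf_ext_succ by assumption. field. split; lra. }
  assert (Hup : binom_pmf a (S n) (S l) = INR (S n) * a * binom_pmf a n l / INR (S l)).
  { rewrite <- binom_pmf_succ by assumption. field. assumption. }
  rewrite Hnext, Hp, Hup, minus_INR, !S_INR by assumption.
  rewrite !S_INR in HSl, HSn. field. repeat split; lra.
Qed.

Lemma Rabs_le_am_gm (x s : R) : 0 < s -> Rabs x <= (x ^ 2 / s + s) / 2.
Proof.
  intros Hs. apply (Rmult_le_reg_l (2 * s)); [lra|].
  replace (2 * s * ((x ^ 2 / s + s) / 2)) with (x ^ 2 + s ^ 2) by (field; lra).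
  pose proof (pow2_ge_0 (Rabs x - s)). rewrite <- (pow2_abs x). nra.
Qed.

Lemma binom_pmf_ext_total_variation (a : R) (n : nat) : 0 < a < 1 ->
  sum_f_R0 (fun l => Rabs (binom_pmf_ext a n l - binom_pmf_ext a n (S l))) n
  <= / sqrt (INR (S n) * a * (1 - a)).
Proof.
  intros Ha. set (V := INR (S n) * a * (1 - a)).
  assert (HV : 0 < V).
  { unfold V. pose proof (lt_0_INR (S n) ltac:(lia)).
    apply Rmult_lt_0_compat; [apply Rmult_lt_0_compat|]; lra. }
  set (s := sqrt V).
  assert (Hs : 0 < s) by (apply sqrt_lt_R0; assumption).
  assert (Hss : s * s = V) by (apply sqrt_sqrt; lra).
  set (f := fun k => binom_pmf a (S n) k * ((INR k - INR (S n) * a) ^ 2 / s + s) / (2 * V)).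
  assert (Hf_ge0 : forall k, 0 <= f k).
  { intros k. unfold f. pose proof (binom_pmf_ge0 a (S n) k ltac:(lra)).
    assert (0 <= (INR k - INR (S n) * a) ^ 2 / s)
      by (apply Rmult_le_pos; [apply pow2_ge_0|apply Rlt_le, Rinv_0_lt_compat; lra]).
    apply Rmult_le_pos; [apply Rmult_le_pos; lra|apply Rlt_le, Rinv_0_lt_compat; lra]. }
  assert (Hf_sum : sum_f_R0 f (S n) = / s).
  { unfold f.
    rewrite (sum_eq _ (fun k => binom_pmf a (S n) k * (INR k - INR (S n) * a) ^ 2
                                  * / (2 * s * V)
                                + binom_pmf a (S n) k * (s / (2 * V)))).
    2:{ intros k _. field. split; lra. }
    rewrite sum_plus, <- !scal_sum, binom_pmf_variance, binom_pmf_sum. fold V.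
    rewrite <- Hss. field. lra. }
  apply Rle_trans with (sum_f_R0 (fun l => f (S l)) n).
  - apply sum_Rle. intros l Hl.
    rewrite binom_pmf_ext_diff by assumption. fold V. unfold f.
    set (x := INR (S l) - INR (S n) * a). set (p := binom_pmf a (S n) (S l)).
    assert (Hp : 0 <= p) by (apply binom_pmf_ge0; lra).
    replace (p * ((x ^ 2 / s + s)) / (2 * V)) with (p * ((x ^ 2 / s + s) / 2) * / V)
      by (field; lra).
    unfold Rdiv. rewrite !Rabs_mult, Rabs_inv, (Rabs_right V), (Rabs_right p) by lra.
    apply Rmult_le_compat_r; [apply Rlt_le, Rinv_0_lt_compat; lra|].
    apply Rmult_le_compat_l; [assumption|]. apply Rabs_le_am_gm, Hs.
  - rewrite <- Hf_sum, (decomp_sum f (S n)) by lia. simpl pred.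
    pose proof (Hf_ge0 0%nat). lra.
Qed.

Definition residue_indicator (d r l : nat) : R := if Nat.eqb (l mod d) r then 1 else 0.

Fixpoint residue_count (d r l : nat) : nat :=
  match l with
  | O => O
  | S l' => (residue_count d r l' + if Nat.eqb (l' mod d) r then 1 else 0)%nat
  end.

Fixpoint residue_discrepancy (d r l : nat) : R :=
  match l with
  | O => 0
  | S l' => residue_discrepancy d r l' + (residue_indicator d r l' - / INR d)
  end.

Lemma residue_count_bounds (d r l : nat) : (1 <= d)%nat -> (r < d)%nat ->
  (residue_count d r l * d <= l + d - 1 - r < (residue_count d r l + 1) * d)%nat.
Proof.
  intros Hd Hr. induction l as [|l IH]; simpl; [lia|].
  pose proof (Nat.div_mod_eq l d). pose proof (Nat.mod_upper_bound l d ltac:(lia)).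
  set (q := (l / d)%nat) in *. set (c := residue_count d r l) in *.
  destruct (Nat.eqb_spec (l mod d) r) as [e|e]; set (m := (l mod d)%nat) in *.
  - assert (c = q) by nia. subst c. nia.
  - split; [lia|]. destruct (Nat.lt_trichotomy c q) as [h|[h|h]]; nia.
Qed.

Lemma residue_discrepancy_eq (d r l : nat) : (1 <= d)%nat ->
  residue_discrepancy d r l = INR (residue_count d r l) - INR l / INR d.
Proof.
  intros Hd. assert (INR d <> 0) by (apply not_0_INR; lia).
  induction l as [|l IH]; simpl residue_discrepancy; simpl residue_count.
  - simpl. field. assumption.
  - rewrite IH, plus_INR, S_INR. unfold residue_indicator.
    destruct (Nat.eqb (l mod d) r); simpl; field; assumption.
Qed.

Lemma residue_discrepancy_bound (d r l : nat) : (1 <= d)%nat -> (r < d)%nat ->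
  Rabs (residue_discrepancy d r l) <= 1.
Proof.
  intros Hd Hr. rewrite residue_discrepancy_eq by assumption.
  destruct (residue_count_bounds d r l Hd Hr) as [Hlo Hhi].
  assert (Hlt1 : (residue_count d r l * d < l + d)%nat) by lia.
  assert (Hlt2 : (l < residue_count d r l * d + d)%nat) by nia.
  apply lt_INR in Hlt1, Hlt2. rewrite plus_INR, mult_INR in Hlt1, Hlt2.
  assert (0 < INR d) by (apply lt_0_INR; lia).
  apply Rabs_le. unfold Rdiv.
  split; apply (Rmult_le_reg_r (INR d)); try assumption;
    rewrite Rmult_minus_distr_r, Rmult_assoc, Rinv_l by lra; lra.
Qed.

Lemma sum_mul_residue_by_parts (d r : nat) (p : nat -> R) (m : nat) :
  sum_f_R0 (fun l => p l * (residue_indicator d r l - / INR d)) m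
  = sum_f_R0 (fun l => residue_discrepancy d r (S l) * (p l - p (S l))) m
    + residue_discrepancy d r (S m) * p (S m).
Proof.
  induction m as [|m IH]; simpl sum_f_R0.
  - simpl. ring.
  - rewrite IH. simpl residue_discrepancy. ring.
Qed.

Lemma binom_residue_sum_sub_inv (n d r : nat) (a : R) :
  binom_residue_sum n d r a - / INR d
  = sum_f_R0 (fun l => binom_pmf_ext a n l * (residue_indicator d r l - / INR d)) n.
Proof.
  unfold binom_residue_sum.
  rewrite <- (Rmult_1_l (/ INR d)) at 1. rewrite <- (binom_pmf_sum a n) at 1.
  rewrite Rmult_comm, scal_sum, <- minus_sum. apply sum_eq. intros l Hl.
  unfold binom_pmf_ext, residue_indicator, binom_pmf.
  rewrite (proj2 (Nat.leb_le l n) Hl). destruct (Nat.eqb (l mod d) r); ring.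
Qed.

Lemma binom_residue_sum_deviation (n d r : nat) (a : R) :
  (1 <= d)%nat -> (r < d)%nat -> 0 < a < 1 ->
  Rabs (binom_residue_sum n d r a - / INR d) <= / sqrt (INR (S n) * a * (1 - a)).
Proof.
  intros Hd Hr Ha.
  assert (Hend : binom_pmf_ext a n (S n) = 0).
  { unfold binom_pmf_ext. now rewrite (proj2 (Nat.leb_gt (S n) n)) by lia. }
  rewrite binom_residue_sum_sub_inv, sum_mul_residue_by_parts, Hend, Rmult_0_r, Rplus_0_r.
  eapply Rle_trans; [apply Rsum_abs|].
  eapply Rle_trans; [|apply binom_pmf_ext_total_variation, Ha].
  apply sum_Rle. intros l _. rewrite Rabs_mult.
  pose proof (residue_discrepancy_bound d r (S l) Hd Hr).
  pose proof (Rabs_pos (binom_pmf_ext a n l - binom_pmf_ext a n (S l))).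
  nra.
Qed.

Theorem lemma1 :
  exists C : R,
    forall (n d r : nat) (alpha : R),
      (1 <= n)%nat -> (1 <= d)%nat -> (d <= n)%nat -> (r < d)%nat ->
      0 < alpha < 1 ->
      Rabs (binom_residue_sum n d r alpha - / INR d)
        <= C / sqrt (alpha * (1 - alpha) * INR n).
Proof.
  exists 1. intros n d r a Hn Hd _ Hr Ha.
  eapply Rle_trans; [apply binom_residue_sum_deviation; assumption|].
  assert (0 < INR n) by (apply lt_0_INR; lia).
  assert (0 < a * (1 - a) * INR n)
    by (apply Rmult_lt_0_compat; [apply Rmult_lt_0_compat|]; lra).
  unfold Rdiv. rewrite Rmult_1_l.
  apply Rinv_le_contravar; [apply sqrt_lt_R0; assumption|].
  apply sqrt_le_1_alt. rewrite S_INR. nra.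
Qed.
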